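(* Let $b>0$, $\beta\in(0,1)$, and let $R>0$ be such that, for the functions $\underline u_{\rm out}(r) = Lr^{-m} - br^{-l} \log \frac{r}{R}$, $\underline v_{\rm out}(r) = m(n-2-m)Lr^{-m-2} +\big[- l(n-2-l) \log \frac{r}{R} + (n-2-2l)\big]br^{-l-2}$, $\underline w_{\rm out}(r) = m(m+2)(n-2-m)(n-4-m)Lr^{-m-4} - l(l+2)(n-2-l)(n-4-l)br^{-l-4} \log \frac{r}{R} + (n-2-2l)(l+2)(n-4-l) b r^{-l-4}$, the numbers $\underline r_1 = \sup\{ r>0 : \underline u_{\rm out}(r) \leqslant 0 \}$, $\underline r_2 = \sup\{ r>0 : \underline v_{\rm out}(r) \leqslant 0 \}$, $\underline r_3 = \sup\{ r>0 : \underline w_{\rm out}(r) \leqslant 0 \}$ are well defined and satisfy $R<\underline r_1<\underline r_2<\underline r_3<+\infty$. For $c>0$ and $r>R$ define, writing $\ell(r)=\log\frac{r}{R}$, \[ \begin{aligned} \overline u_{\rm out}(r) &= Lr^{-m} -b r^{-l} \ell + cr^{-l} \ell^{\beta},\\ \overline v_{\rm out}(r) &= m(n-2-m)Lr^{-m-2} - \big[ l(n-2-l) \ell - (n-2-2l)\big] br^{-l-2} \\ &\quad + \big[ l(n-2-l) \ell^{\beta} -\beta(n-2-2l) \ell^{\beta-1} +\beta(1-\beta) \ell^{\beta-2} \big]cr^{-l-2},\\ \overline w_{\rm out}(r) &= m(m+2)(n-2-m)(n-4-m)Lr^{-m-4} - (l+2)(n-4-l) \big[ l(n-2-l) \ell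 -(n-2-2l) \big]br^{-l-4}\\ &\quad +\Big[ l (l+2) (n-2-l) (n-4-l) \ell^{\beta} - \beta(n-2-2l) (l+2)(n-4-l) \ell^{\beta-1} \\ &\qquad +\beta(1-\beta) \big(l(n-2-l)+(l+2)(n-4-l)\big) \ell^{\beta-2} + \beta(1-\beta)(2-\beta) (n-2-2l) \ell^{\beta-3} \\ &\qquad - \beta(1-\beta)(2-\beta)(3-\beta) \ell^{\beta-4} \Big]cr^{-l-4}. \end{aligned} \] Then there exists $c_1>0$ such that for all $c>c_1$, \[ -\Delta \overline u_{\rm out} = \overline v_{\rm out} \ \text{ for all } r>R,\qquad -\Delta \overline v_{\rm out} = \overline w_{\rm out} \ \text{ for all } r>R,\qquad -\Delta \overline w_{\rm out} \geqslant \overline u_{\rm out}^p \ \text{ for all } r>\overline r_1, \] where $\overline r_1 = R \exp\big((c/b)^{\frac{1}{1-\beta}}\big)$.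
   Context: Let $n\geqslant 15$ and $p=p_{\mathsf{JL}}(6,n)$, where $p_{\mathsf{JL}}(6,n)=\frac{(n+4)\sqrt{3} - \sqrt{\sqrt[3]{K_0+K_1}+ \sqrt[3]{K_0-K_1} + 3n^2+32 }}{(n-8)\sqrt{3} - \sqrt{\sqrt[3]{K_0+K_1} + \sqrt[3]{K_0-K_1} + 3n^2+32 }}$ with $2K_0 =-27n^6+324 n^5-756n^4-2592 n^3 + 25776 n^2 +5184 n -23744$, $2K_1 = \sqrt{(2K_0)^2 - 4(192n^2+256)^3}$. Let $m=6/(p-1)$, $L=\big(m(m+2)(m+4)(n-2-m)(n-4-m)(n-6-m)\big)^{1/(p-1)}$, let $\lambda_3$ be the smallest positive root of $P(\lambda)=(m+\lambda)(m+\lambda+2)(m+\lambda+4)(n-2-m-\lambda)(n-4-m-\lambda)(n-6-m-\lambda)-pL^{p-1}$, and set $l=m+\lambda_3$. For a function $f$ of $r=|x|$, $\Delta f$ denotes the Laplacian in $\mathbf R^n$ of $x\mapsto f(|x|)$, i.e. $f''+\frac{n-1}{r}f'$. *)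

From Stdlib Require Import Reals.
From Coquelicot Require Import Coquelicot.
Open Scope R_scope.

Definition rpow (x y : R) : R := if Rlt_dec 0 x then Rpower x y else 0.

Definition cbrt (x : R) : R :=
  if Rlt_dec 0 x then Rpower x (1/3)
  else if Rlt_dec x 0 then - Rpower (- x) (1/3) else 0.

Definition K0 (n : R) : R :=
  (-27*n^6 + 324*n^5 - 756*n^4 - 2592*n^3 + 25776*n^2 + 5184*n - 23744) / 2.
Definition K1 (n : R) : R :=
  sqrt ((2 * K0 n)^2 - 4 * (192*n^2 + 256)^3) / 2.

Definition SJL (n : R) : R :=
  sqrt (cbrt (K0 n + K1 n) + cbrt (K0 n - K1 n) + 3*n^2 + 32).

Definition pJL (n : R) : R :=
  ((n + 4) * sqrt 3 - SJL n) / ((n - 8) * sqrt 3 - SJL n).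

Definition mexp (n : R) : R := 6 / (pJL n - 1).

Definition Lc (n : R) : R :=
  let m := mexp n in
  rpow (m*(m+2)*(m+4)*(n-2-m)*(n-4-m)*(n-6-m)) (1 / (pJL n - 1)).

Definition Ppoly (n lam : R) : R :=
  let m := mexp n in let p := pJL n in
  (m+lam)*(m+lam+2)*(m+lam+4)*(n-2-m-lam)*(n-4-m-lam)*(n-6-m-lam)
  - p * rpow (Lc n) (p - 1).

(* radial Laplacian in R^n : f'' + (n-1)/r f' *)
Definition lap (n : R) (f : R -> R) (r : R) : R :=
  Derive (Derive f) r + (n - 1) / r * Derive f r.

Definition ell (R0 r : R) : R := ln (r / R0).

Definition u_low (n l b R0 : R) (r : R) : R :=
  let m := mexp n in let L := Lc n in
  L * rpow r (-m) - b * rpow r (-l) * ell R0 r.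

Definition v_low (n l b R0 : R) (r : R) : R :=
  let m := mexp n in let L := Lc n in
  m*(n-2-m)*L*rpow r (-m-2)
  + (- l*(n-2-l) * ell R0 r + (n-2-2*l)) * b * rpow r (-l-2).

Definition w_low (n l b R0 : R) (r : R) : R :=
  let m := mexp n in let L := Lc n in
  m*(m+2)*(n-2-m)*(n-4-m)*L*rpow r (-m-4)
  - l*(l+2)*(n-2-l)*(n-4-l)*b*rpow r (-l-4) * ell R0 r
  + (n-2-2*l)*(l+2)*(n-4-l)*b*rpow r (-l-4).

Definition u_up (n l b c beta R0 : R) (r : R) : R :=
  let m := mexp n in let L := Lc n in let e := ell R0 r in
  L * rpow r (-m) - b * rpow r (-l) * e + c * rpow r (-l) * rpow e beta.

Definition v_up (n l b c beta R0 : R) (r : R) : R :=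
  let m := mexp n in let L := Lc n in let e := ell R0 r in
  m*(n-2-m)*L*rpow r (-m-2)
  - (l*(n-2-l)*e - (n-2-2*l)) * b * rpow r (-l-2)
  + (l*(n-2-l)*rpow e beta - beta*(n-2-2*l)*rpow e (beta-1)
     + beta*(1-beta)*rpow e (beta-2)) * c * rpow r (-l-2).

Definition w_up (n l b c beta R0 : R) (r : R) : R :=
  let m := mexp n in let L := Lc n in let e := ell R0 r in
  m*(m+2)*(n-2-m)*(n-4-m)*L*rpow r (-m-4)
  - (l+2)*(n-4-l)*(l*(n-2-l)*e - (n-2-2*l)) * b * rpow r (-l-4)
  + ( l*(l+2)*(n-2-l)*(n-4-l)*rpow e beta
      - beta*(n-2-2*l)*(l+2)*(n-4-l)*rpow e (beta-1)
      + beta*(1-beta)*(l*(n-2-l) + (l+2)*(n-4-l))*rpow e (beta-2)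
      + beta*(1-beta)*(2-beta)*(n-2-2*l)*rpow e (beta-3)
      - beta*(1-beta)*(2-beta)*(3-beta)*rpow e (beta-4) ) * c * rpow r (-l-4).

From Stdlib Require Import Reals Lra Psatz List.
From Coquelicot Require Import Coquelicot.
Open Scope R_scope.
Import ListNotations.

(* With [Q(x) = x(x+2)(x+4)(n-2-x)(n-4-x)(n-6-x)] and [m = 6/(p-1)], Cardano's
   formula defining [p = p_JL(6,n)] says exactly [p Q(m) = Q((n-6)/2)].  As [Q]
   is maximal at the centre [(n-6)/2] of its symmetric range, the smallest
   positive root of [P] is [λ3 = (n-6)/2 - m], i.e. [l = (n-6)/2].  For the
   inequality write [ū = L r^-m - X] with [0 <= X <= b ℓ r^-l] (valid once
   [ℓ > (c/b)^(1/(1-β))]) and expand [ū^p] to second order in [X]: the linear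
   term cancels [Q(l) r^(-l-6) (c ℓ^β - b ℓ)] in [-Δ w̄], and the quadratic
   remainder, of size [ℓ^2 r^(m-2l)], is absorbed by the positive term
   [β(1-β)(...) c ℓ^(β-2) r^(-l-6)] because [r^(m-l)] decays faster than any
   power of [ℓ]. *)

(** * Radial functions [r^a ℓ^k] *)

Lemma rpow_Rpower x a : 0 < x -> rpow x a = Rpower x a.
Proof. intros Hx; unfold rpow; destruct (Rlt_dec 0 x); [reflexivity | lra]. Qed.

Lemma rpow_pos x a : 0 < x -> 0 < rpow x a.
Proof. intros Hx; rewrite rpow_Rpower by exact Hx; apply exp_pos. Qed.

Lemma rpow_0 x : 0 < x -> rpow x 0 = 1.
Proof. intros Hx; rewrite rpow_Rpower by exact Hx; apply Rpower_O, Hx. Qed.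

Lemma rpow_1 x : 0 < x -> rpow x 1 = x.
Proof. intros Hx; rewrite rpow_Rpower by exact Hx; apply Rpower_1, Hx. Qed.

Lemma rpow_sub1 x a : 0 < x -> rpow x (a - 1) = rpow x a / x.
Proof.
  intros Hx; rewrite !rpow_Rpower by exact Hx; unfold Rminus.
  rewrite Rpower_plus, Rpower_Ropp, Rpower_1 by exact Hx; reflexivity.
Qed.

Lemma rpow_sub2 x a : 0 < x -> rpow x (a - 2) = rpow x a / x / x.
Proof.
  intros Hx; replace (a - 2) with (a - 1 - 1) by ring.
  rewrite !rpow_sub1 by exact Hx; reflexivity.
Qed.

Lemma rpow_sub3 x a : 0 < x -> rpow x (a - 3) = rpow x a / x / x / x.
Proof.
  intros Hx; replace (a - 3) with (a - 1 - 2) by ring.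
  rewrite rpow_sub2, rpow_sub1 by exact Hx; reflexivity.
Qed.

Lemma rpow_sub4 x a : 0 < x -> rpow x (a - 4) = rpow x a / x / x / x / x.
Proof.
  intros Hx; replace (a - 4) with (a - 2 - 2) by ring.
  rewrite !rpow_sub2 by exact Hx; reflexivity.
Qed.

Lemma ell_pos R0 x : 0 < R0 -> R0 < x -> 0 < ell R0 x.
Proof.
  intros HR0 Hx; unfold ell; rewrite <- ln_1; apply ln_increasing; [lra |].
  apply (Rmult_lt_reg_r R0); [lra |]; field_simplify; lra.
Qed.

Lemma locally_gt (R0 x : R) : R0 < x -> locally x (fun y => R0 < y).
Proof.
  intros Hx; assert (Hd : 0 < x - R0) by lra.
  exists (mkposreal _ Hd); intros y Hy; cbv [ball] in Hy; simpl in Hy.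
  unfold AbsRing_ball, abs, minus, plus, opp in Hy; simpl in Hy.
  apply Rabs_lt_between in Hy; lra.
Qed.

Lemma lap_ext_gt n R0 f g r :
  (forall y, R0 < y -> f y = g y) -> R0 < r -> lap n f r = lap n g r.
Proof.
  intros Hfg Hr; unfold lap.
  assert (HD : forall y, R0 < y -> Derive f y = Derive g y).
  { intros y Hy; apply Derive_ext_loc.
    apply (filter_imp _ _ (fun z Hz => Hfg z Hz)), locally_gt, Hy. }
  rewrite (HD r Hr); f_equal; apply Derive_ext_loc.
  apply (filter_imp _ _ (fun z Hz => HD z Hz)), locally_gt, Hr.
Qed.

Definition logpow (R0 a k x : R) : R := rpow x a * rpow (ell R0 x) k.

(* [logpow_sum R0 [(c_i, a_i, k_i)]] is [Σ c_i r^a_i ℓ^k_i]; [logpow_deriv] maps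
   such a list to the list of the derivative. *)
Fixpoint logpow_sum (R0 : R) (s : list (R * R * R)) (x : R) : R :=
  match s with
  | [] => 0
  | (c, a, k) :: t => c * logpow R0 a k x + logpow_sum R0 t x
  end.

Fixpoint logpow_deriv (s : list (R * R * R)) : list (R * R * R) :=
  match s with
  | [] => []
  | (c, a, k) :: t => (c * a, a - 1, k) :: (c * k, a - 1, k - 1) :: logpow_deriv t
  end.

Lemma is_derive_logpow R0 a k x : 0 < R0 -> R0 < x ->
  is_derive (logpow R0 a k) x (a * logpow R0 (a - 1) k x + k * logpow R0 (a - 1) (k - 1) x).
Proof.
  intros HR0 Hx.
  apply is_derive_ext_loc with (f := fun y => exp (a * ln y) * exp (k * ln (ln (y / R0)))).
  { apply (filter_imp (fun y => R0 < y)); [| apply locally_gt, Hx].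
    intros y Hy; unfold logpow; rewrite !rpow_Rpower; [reflexivity | apply ell_pos | ]; lra. }
  assert (He := ell_pos R0 x HR0 Hx); unfold ell in He.
  auto_derive.
  - repeat split; try lra; apply Rdiv_lt_0_compat; lra.
  - unfold logpow, ell; rewrite !rpow_sub1, !rpow_Rpower by lra.
    unfold Rpower, Rdiv in *; field; lra.
Qed.

Lemma is_derive_logpow_sum R0 s x : 0 < R0 -> R0 < x ->
  is_derive (logpow_sum R0 s) x (logpow_sum R0 (logpow_deriv s) x).
Proof.
  intros HR0 Hx; induction s as [| [[c a] k] t IH]; simpl.
  - auto_derive; auto.
  - replace (c * a * logpow R0 (a - 1) k x
             + (c * k * logpow R0 (a - 1) (k - 1) x + logpow_sum R0 (logpow_deriv t) x))
      with (c * (a * logpow R0 (a - 1) k x + k * logpow R0 (a - 1) (k - 1) x)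
            + logpow_sum R0 (logpow_deriv t) x) by ring.
    apply @is_derive_plus; [apply @is_derive_scal, is_derive_logpow | exact IH]; lra.
Qed.

Lemma lap_logpow_sum n R0 s r : 0 < R0 -> R0 < r ->
  lap n (logpow_sum R0 s) r
  = logpow_sum R0 (logpow_deriv (logpow_deriv s)) r
    + (n - 1) / r * logpow_sum R0 (logpow_deriv s) r.
Proof.
  intros HR0 Hr; unfold lap.
  rewrite (is_derive_unique _ _ _ (is_derive_logpow_sum R0 s r HR0 Hr)).
  rewrite (Derive_ext_loc _ (logpow_sum R0 (logpow_deriv s))).
  - rewrite (is_derive_unique _ _ _ (is_derive_logpow_sum R0 _ r HR0 Hr)); reflexivity.
  - apply (filter_imp (fun y => R0 < y)); [| apply locally_gt, Hr].
    intros y Hy; apply is_derive_unique, is_derive_logpow_sum; lra.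
Qed.

Ltac simpl_rpow x e Hx He :=
  repeat rewrite ?(rpow_sub1 x _ Hx), ?(rpow_sub2 x _ Hx), ?(rpow_sub3 x _ Hx),
    ?(rpow_sub4 x _ Hx), ?(rpow_sub1 e _ He), ?(rpow_sub2 e _ He),
    ?(rpow_sub3 e _ He), ?(rpow_sub4 e _ He), ?(rpow_0 e He), ?(rpow_1 e He).

Lemma minus_lap_u_up n l b c beta R0 r : 0 < R0 -> R0 < r ->
  - lap n (u_up n l b c beta R0) r = v_up n l b c beta R0 r.
Proof.
  intros HR0 Hr; set (m := mexp n); set (L := Lc n).
  rewrite (lap_ext_gt n R0 _ (logpow_sum R0 [(L, -m, 0); (-b, -l, 1); (c, -l, beta)])); auto.
  2:{ intros y Hy; cbn [logpow_sum]; unfold u_up, logpow; fold m L.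
      rewrite rpow_0, rpow_1 by (apply ell_pos; lra); ring. }
  rewrite lap_logpow_sum by lra; cbn [logpow_sum logpow_deriv]; unfold logpow, v_up; fold m L.
  assert (He := ell_pos R0 r HR0 Hr); assert (Hr0 : 0 < r) by lra.
  set (e := ell R0 r) in *; simpl_rpow r e Hr0 He; field; lra.
Qed.

Lemma minus_lap_v_up n l b c beta R0 r : 0 < R0 -> R0 < r -> n = 2 * l + 6 ->
  - lap n (v_up n l b c beta R0) r = w_up n l b c beta R0 r.
Proof.
  intros HR0 Hr Hn; set (m := mexp n); set (L := Lc n).
  rewrite (lap_ext_gt n R0 _ (logpow_sum R0
    [(m * (n - 2 - m) * L, -m - 2, 0); (- b * (l * (n - 2 - l)), -l - 2, 1);
     (b * (n - 2 - 2 * l), -l - 2, 0); (c * (l * (n - 2 - l)), -l - 2, beta);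
     (- c * (beta * (n - 2 - 2 * l)), -l - 2, beta - 1);
     (c * (beta * (1 - beta)), -l - 2, beta - 2)])); auto.
  2:{ intros y Hy; cbn [logpow_sum]; unfold v_up, logpow; fold m L.
      rewrite !rpow_0, rpow_1 by (apply ell_pos; lra); ring. }
  rewrite lap_logpow_sum by lra; cbn [logpow_sum logpow_deriv]; unfold logpow, w_up; fold m L.
  assert (He := ell_pos R0 r HR0 Hr); assert (Hr0 : 0 < r) by lra.
  set (e := ell R0 r) in *; clearbody m L; subst n.
  simpl_rpow r e Hr0 He; field; lra.
Qed.

Definition QQ (n x : R) : R := x * (x + 2) * (x + 4) * (n - 2 - x) * (n - 4 - x) * (n - 6 - x).

(* For [n = 2l+6], [-Δ³ (r^-l ℓ^β) = r^(-l-6) ℓ^β (QQ n l + log_correction l β ℓ)]. *)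
Definition log_correction (l beta e : R) : R :=
  beta * (1 - beta) * ((l + 2)^2 * (l + 4)^2 + l^2 * (l + 4)^2 + l^2 * (l + 2)^2) / e^2
  + (l^2 + (l + 2)^2 + (l + 4)^2) * (beta * (beta - 1) * (beta - 2) * (beta - 3)) / e^4
  - beta * (beta - 1) * (beta - 2) * (beta - 3) * (beta - 4) * (beta - 5) / e^6.

Lemma minus_lap_w_up n l b c beta R0 r : 0 < R0 -> R0 < r -> n = 2 * l + 6 ->
  let e := ell R0 r in
  - lap n (w_up n l b c beta R0) r =
  (Lc n * QQ n (mexp n) * rpow r (- mexp n)
   + rpow r (- l) * (QQ n l * (c * rpow e beta - b * e)
                     + c * rpow e beta * log_correction l beta e)) / r^6.
Proof.
  intros HR0 Hr Hn e; set (m := mexp n); set (L := Lc n).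
  rewrite (lap_ext_gt n R0 _ (logpow_sum R0
    [(m * (m + 2) * (n - 2 - m) * (n - 4 - m) * L, -m - 4, 0);
     (- b * ((l + 2) * (n - 4 - l) * (l * (n - 2 - l))), -l - 4, 1);
     (b * ((l + 2) * (n - 4 - l) * (n - 2 - 2 * l)), -l - 4, 0);
     (c * (l * (l + 2) * (n - 2 - l) * (n - 4 - l)), -l - 4, beta);
     (- c * (beta * (n - 2 - 2 * l) * (l + 2) * (n - 4 - l)), -l - 4, beta - 1);
     (c * (beta * (1 - beta) * (l * (n - 2 - l) + (l + 2) * (n - 4 - l))), -l - 4, beta - 2);
     (c * (beta * (1 - beta) * (2 - beta) * (n - 2 - 2 * l)), -l - 4, beta - 3);
     (- c * (beta * (1 - beta) * (2 - beta) * (3 - beta)), -l - 4, beta - 4)])); auto.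
  2:{ intros y Hy; cbn [logpow_sum]; unfold w_up, logpow; fold m L.
      rewrite !rpow_0, rpow_1 by (apply ell_pos; lra); ring. }
  rewrite lap_logpow_sum by lra; cbn [logpow_sum logpow_deriv]; unfold logpow, QQ, log_correction.
  fold m L.
  assert (He := ell_pos R0 r HR0 Hr); assert (Hr0 : 0 < r) by lra.
  fold e in He |- *; clearbody e m L; subst n.
  simpl_rpow r e Hr0 He; field; lra.
Qed.

(** * The exponent [p_JL(6,n)] and the root [λ3] *)

Lemma cbrt_cube x : cbrt x ^ 3 = x.
Proof.
  assert (Hc : forall z, 0 < z -> Rpower z (1/3) ^ 3 = z).
  { intros z Hz; rewrite <- Rpower_pow by apply exp_pos; rewrite Rpower_mult.
    replace (1/3 * INR 3) with 1 by (simpl; field); apply Rpower_1, Hz. }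
  unfold cbrt; destruct (Rlt_dec 0 x) as [Hx | Hx]; [now apply Hc |].
  destruct (Rlt_dec x 0) as [Hx' | Hx'].
  - replace ((- Rpower (- x) (1/3)) ^ 3) with (- (Rpower (- x) (1/3) ^ 3)) by ring.
    rewrite Hc; lra.
  - replace x with 0 by lra; ring.
Qed.

Lemma pow3_inj x y : x ^ 3 = y ^ 3 -> x = y.
Proof.
  intros H.
  assert (Hf : (x - y) * ((x + y / 2) ^ 2 + 3 / 4 * y ^ 2) = 0)
    by (replace 0 with (x ^ 3 - y ^ 3) by lra; field).
  apply Rmult_integral in Hf; destruct Hf as [Hf | Hf]; [lra |].
  assert (Hy : y = 0) by (apply Rsqr_0_uniq; unfold Rsqr; nra).
  subst y; assert (Hx : x = 0) by (apply Rsqr_0_uniq; unfold Rsqr; nra); lra.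
Qed.

Definition depressed_cubic (q K y : R) : R := y ^ 3 - 3 * q * y - 2 * K.

Definition cardano (q K : R) : R :=
  cbrt (K + sqrt (K ^ 2 - q ^ 3)) + cbrt (K - sqrt (K ^ 2 - q ^ 3)).

Lemma cardano_root q K : q ^ 3 < K ^ 2 ->
  depressed_cubic q K (cardano q K) = 0 /\ 4 * q < cardano q K ^ 2.
Proof.
  intros Hd; unfold depressed_cubic, cardano.
  set (D := sqrt (K ^ 2 - q ^ 3)).
  assert (HD : 0 < D) by (apply sqrt_lt_R0; lra).
  assert (HD2 : D ^ 2 = K ^ 2 - q ^ 3) by (unfold D; rewrite <- Rsqr_pow2; apply Rsqr_sqrt; lra).
  set (u := cbrt (K + D)); set (v := cbrt (K - D)).
  assert (Hu : u ^ 3 = K + D) by apply cbrt_cube.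
  assert (Hv : v ^ 3 = K - D) by apply cbrt_cube.
  assert (Huv : u * v = q) by (apply pow3_inj; rewrite Rpow_mult_distr, Hu, Hv; nra).
  assert (Hne : u <> v) by (intros E; rewrite E in Hu; lra).
  split.
  - replace ((u + v) ^ 3 - 3 * q * (u + v) - 2 * K)
      with (u ^ 3 + v ^ 3 - 2 * K + 3 * (u + v) * (u * v - q)) by ring.
    rewrite Hu, Hv, Huv; ring.
  - assert (0 < (u - v)²) by (apply Rsqr_pos_lt; lra); unfold Rsqr in *; nra.
Qed.

(* At a root [A], the cubic is [(y - A) ((y + A/2)^2 + 3/4 (A^2 - 4q))]. *)
Lemma depressed_cubic_sign q K A y :
  depressed_cubic q K A = 0 -> 4 * q < A ^ 2 ->
  (0 < depressed_cubic q K y -> A < y) /\ (depressed_cubic q K y < 0 -> y < A).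
Proof.
  unfold depressed_cubic; intros HA HA2.
  assert (E : y ^ 3 - 3 * q * y - 2 * K
              = (y - A) * ((y + A / 2) ^ 2 + 3 / 4 * (A ^ 2 - 4 * q))
                + (A ^ 3 - 3 * q * A - 2 * K)) by field.
  rewrite HA, Rplus_0_r in E.
  assert (P : 0 < (y + A / 2) ^ 2 + 3 / 4 * (A ^ 2 - 4 * q))
    by (generalize (pow2_ge_0 (y + A / 2)); lra).
  rewrite E; split; intros H; nra.
Qed.

Fixpoint horner (cs : list R) (t : R) : R :=
  match cs with [] => 0 | c :: cs' => c + t * horner cs' t end.

Lemma pos_of_horner x t c cs : x = horner (c :: cs) t ->
  0 < c -> List.Forall (fun a => 0 <= a) cs -> 0 <= t -> 0 < x.
Proof.
  intros -> Hc Hcs Ht; simpl.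
  assert (0 <= horner cs t).
  { induction Hcs as [| a cs' Ha _ IH]; simpl; [lra |].
    apply Rplus_le_le_0_compat, Rmult_le_pos; assumption. }
  generalize (Rmult_le_pos _ _ Ht H); lra.
Qed.

Definition qJL (N : R) : R := 192 * N ^ 2 + 256.

Ltac horner_certificate t c cs :=
  apply (pos_of_horner _ t c cs);
  [simpl; unfold depressed_cubic, K0, qJL; field | lra | repeat constructor; lra | lra].

Lemma K0_discriminant N : 15 <= N -> qJL N ^ 3 < K0 N ^ 2.
Proof.
  intros HN.
  assert (0 < (2 * K0 N) ^ 2 - 4 * qJL N ^ 3).
  { horner_certificate (N - 15) 10214160759983817
      [10585461850409628; 4894534148604354; 1347076448060364; 246965545626615;
       31863611628216; 2971699904988; 202081266936; 9951685191; 346289580;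
       8084610; 113724; 729]. }
  lra.
Qed.

Lemma K1_sqrt N : K1 N = sqrt (K0 N ^ 2 - qJL N ^ 3).
Proof.
  unfold K1; replace ((2 * K0 N) ^ 2 - 4 * (192 * N ^ 2 + 256) ^ 3)
    with (2 * 2 * (K0 N ^ 2 - qJL N ^ 3)) by (unfold qJL; ring).
  rewrite sqrt_mult_alt, sqrt_square by lra; field.
Qed.

Lemma SJL_cardano N : SJL N = sqrt (cardano (qJL N) (K0 N) + 3 * N ^ 2 + 32).
Proof. unfold SJL, cardano; rewrite K1_sqrt; reflexivity. Qed.

(* Substituting [A = 3 s^2 - 3 N^2 - 32] turns Cardano's cubic into the
   equation below, and [s = SJL N / sqrt 3]. *)
Lemma pJL_root N : 15 <= N -> exists s, 0 <= s < N - 8 /\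
  (N ^ 2 - s ^ 2) * ((N + 4) ^ 2 - s ^ 2) * ((N - 4) ^ 2 - s ^ 2)
  = ((N - 6) * (N - 2) * (N + 2)) ^ 2 /\
  pJL N = (N + 4 - s) / (N - 8 - s).
Proof.
  intros HN.
  set (A := cardano (qJL N) (K0 N)).
  destruct (cardano_root (qJL N) (K0 N) (K0_discriminant N HN)) as [HA HA2]; fold A in HA, HA2.
  assert (Hup : A < 160 - 48 * N).
  { apply (depressed_cubic_sign _ _ _ _ HA HA2).
    horner_certificate (N - 15) 66339 [22959450; 7960869; 1058508; 67581; 2106; 27]. }
  assert (Hlo : - (3 * N ^ 2 + 32) < A).
  { apply (depressed_cubic_sign _ _ _ _ HA HA2), Ropp_lt_cancel; rewrite Ropp_0.
    horner_certificate (N - 15) 158546808 [58825764; 8645616; 629208; 22680; 324]. }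
  set (y := (A + 3 * N ^ 2 + 32) / 3).
  assert (Hy : 0 < y < (N - 8) ^ 2) by (unfold y; split; nra).
  exists (sqrt y).
  assert (Hs2 : sqrt y ^ 2 = y) by (rewrite <- Rsqr_pow2; apply Rsqr_sqrt; lra).
  assert (Hs : 0 <= sqrt y < N - 8).
  { split; [apply sqrt_pos |].
    rewrite <- (sqrt_pow2 (N - 8)) by lra; apply sqrt_lt_1_alt; lra. }
  repeat split; try tauto.
  - unfold depressed_cubic, qJL in HA; replace A with (3 * y - 3 * N ^ 2 - 32) in HA
      by (unfold y; field).
    rewrite Hs2; unfold K0 in HA; nra.
  - assert (HS : SJL N = sqrt 3 * sqrt y).
    { rewrite SJL_cardano, <- sqrt_mult_alt by lra; f_equal; unfold y; fold A; field. }
    assert (H3 := Rlt_sqrt3_0).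
    unfold pJL; rewrite HS; field; split; nra.
Qed.

Lemma QQ_pos c x : 0 < x < c -> 0 < QQ (2 * c + 6) x.
Proof. intros Hx; unfold QQ; repeat apply Rmult_lt_0_compat; lra. Qed.

(* With [n = 2c+6], [QQ n x] is a product of the [(c+j)^2 - (x-c)^2], [j = 0,2,4]. *)
Lemma QQ_lt_center c x : 0 < x < c -> QQ (2 * c + 6) x < QQ (2 * c + 6) c.
Proof.
  intros Hx; set (t := (x - c) ^ 2).
  assert (Ht : 0 < t < c ^ 2) by (unfold t; split; nra).
  replace (QQ (2 * c + 6) x) with ((c ^ 2 - t) * ((c + 2) ^ 2 - t) * ((c + 4) ^ 2 - t))
    by (unfold QQ, t; ring).
  replace (QQ (2 * c + 6) c) with (c ^ 2 * (c + 2) ^ 2 * (c + 4) ^ 2) by (unfold QQ; ring).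
  assert (0 < (c ^ 2 - t) * ((c + 2) ^ 2 - t)) by nra.
  assert ((c ^ 2 - t) * ((c + 2) ^ 2 - t) < c ^ 2 * (c + 2) ^ 2) by nra.
  nra.
Qed.

Lemma pJL_balance N : 15 <= N ->
  0 < mexp N < (N - 6) / 2 /\ 1 < pJL N /\ pJL N * QQ N (mexp N) = QQ N ((N - 6) / 2).
Proof.
  intros HN; destruct (pJL_root N HN) as (s & Hs & Hcubic & Hp).
  assert (Hm : mexp N = (N - 8 - s) / 2) by (unfold mexp; rewrite Hp; field; lra).
  repeat split.
  - rewrite Hm; lra.
  - rewrite Hm; lra.
  - rewrite Hp; apply (Rmult_lt_reg_r (N - 8 - s)); [lra |]; field_simplify; lra.
  - rewrite Hp, Hm; unfold QQ.
    transitivity ((N ^ 2 - s ^ 2) * ((N + 4) ^ 2 - s ^ 2) * ((N - 4) ^ 2 - s ^ 2) / 64);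
      [field; lra | rewrite Hcubic; field].
Qed.

Lemma Lc_pow N : 1 < pJL N -> 0 < QQ N (mexp N) ->
  0 < Lc N /\ rpow (Lc N) (pJL N - 1) = QQ N (mexp N).
Proof.
  intros Hp HQ.
  assert (HL : Lc N = Rpower (QQ N (mexp N)) (1 / (pJL N - 1)))
    by (unfold Lc; rewrite rpow_Rpower by exact HQ; reflexivity).
  split; [rewrite HL; apply exp_pos |].
  rewrite rpow_Rpower, HL, Rpower_mult by (rewrite HL; apply exp_pos).
  replace (1 / (pJL N - 1) * (pJL N - 1)) with 1 by (field; lra); apply Rpower_1, HQ.
Qed.

(* [P] is [QQ n (m + λ) - QQ n ((n-6)/2)], which is negative on [(0, (n-6)/2 - m)]. *)
Lemma smallest_root_center N lam3 : 15 <= N -> 0 < lam3 -> Ppoly N lam3 = 0 ->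
  (forall lam, 0 < lam -> Ppoly N lam = 0 -> lam3 <= lam) ->
  mexp N + lam3 = (N - 6) / 2.
Proof.
  intros HN Hlam HP Hmin.
  destruct (pJL_balance N HN) as (Hm & Hp & HpQ).
  set (c := (N - 6) / 2) in *; replace N with (2 * c + 6) in * by (unfold c; field).
  destruct (Lc_pow _ Hp (QQ_pos c _ Hm)) as [_ HLp].
  assert (HPQ : forall lam,
    Ppoly (2 * c + 6) lam = QQ (2 * c + 6) (mexp (2 * c + 6) + lam) - QQ (2 * c + 6) c).
  { intros lam; unfold Ppoly; rewrite HLp, HpQ; unfold QQ; ring. }
  destruct (Rtotal_order (mexp (2 * c + 6) + lam3) c) as [Hlt | [Heq | Hgt]]; auto.
  - assert (H := QQ_lt_center c (mexp (2 * c + 6) + lam3) ltac:(lra)).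
    rewrite HPQ in HP; lra.
  - assert (H := Hmin (c - mexp (2 * c + 6)) ltac:(lra)).
    rewrite HPQ in H; replace (mexp (2 * c + 6) + (c - mexp (2 * c + 6))) with c in H by ring.
    specialize (H ltac:(ring)); lra.
Qed.

Lemma exp_ge_pow5 y : 0 <= y -> y ^ 5 / 3125 <= exp y.
Proof.
  intros Hy.
  replace (exp y) with (exp (y / 5) ^ 5)
    by (simpl; rewrite Rmult_1_r, <- !exp_plus; f_equal; field).
  replace (y ^ 5 / 3125) with ((y / 5) ^ 5) by field.
  apply pow_incr; generalize (exp_ineq1_le (y / 5)); lra.
Qed.

Lemma exp_neg_le y : 0 <= y -> exp (- y) <= 1 - y + y ^ 2.
Proof.
  intros Hy.
  assert (Hexp : (1 + y / 2) ^ 2 <= exp y).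
  { replace (exp y) with (exp (y / 2) ^ 2)
      by (simpl; rewrite Rmult_1_r, <- exp_plus; f_equal; field).
    apply pow_incr; generalize (exp_ineq1_le (y / 2)); lra. }
  rewrite exp_Ropp; assert (0 < exp y) by apply exp_pos.
  apply (Rmult_le_reg_r (exp y)); [lra |]; rewrite Rinv_l by lra.
  assert (0 <= 1 - y + y ^ 2) by nra.
  apply Rle_trans with ((1 - y + y ^ 2) * (1 + y / 2) ^ 2); [nra |].
  apply Rmult_le_compat_l; lra.
Qed.

Lemma Rpower_one_sub_le d p : 0 <= d < 1 -> 0 < p ->
  Rpower (1 - d) p <= 1 - p * d + (p * d) ^ 2.
Proof.
  intros Hd Hp; unfold Rpower.
  assert (Hln : ln (1 - d) <= - d).
  { rewrite <- (ln_exp (- d)).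
    destruct (Req_dec (1 - d) (exp (- d))) as [-> | Hne]; [lra |].
    apply Rlt_le, ln_increasing; [lra |].
    generalize (exp_ineq1_le (- d)); lra. }
  apply Rle_trans with (exp (- (p * d))); [| apply exp_neg_le; nra].
  destruct (Req_dec (p * ln (1 - d)) (- (p * d))) as [-> | Hne]; [lra |].
  apply Rlt_le, exp_increasing; nra.
Qed.

Lemma Rpower_sub_le A X p : 0 <= X < A -> 0 < p ->
  Rpower (A - X) p <= Rpower A p * (1 - p * (X / A) + (p * (X / A)) ^ 2).
Proof.
  intros HX Hp.
  assert (Hd : 0 <= X / A < 1).
  { split; [apply Rmult_le_pos; [lra | apply Rlt_le, Rinv_0_lt_compat; lra] |].
    apply (Rmult_lt_reg_r A); [lra |]; field_simplify; lra. }
  replace (A - X) with (A * (1 - X / A)) by (field; lra).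
  rewrite <- Rpower_mult_distr by lra.
  apply Rmult_le_compat_l; [apply Rlt_le, exp_pos | apply Rpower_one_sub_le; assumption].
Qed.

Lemma ell_gt_of_gt R0 t r : 0 < R0 -> R0 * exp t < r -> t < ell R0 r.
Proof.
  intros HR0 Hr; assert (0 < exp t) by apply exp_pos.
  unfold ell; rewrite <- (ln_exp t); apply ln_increasing; [apply exp_pos |].
  apply (Rmult_lt_reg_r R0); [lra |]; field_simplify; lra.
Qed.

(* [ℓ^5 r^(-d)] stays bounded because [r^(-d) = R0^(-d) exp (-d ℓ)]. *)
Lemma ell_pow5_Rpower_le R0 r d : 0 < R0 -> R0 < r -> 0 < d ->
  ell R0 r ^ 5 * Rpower r (- d) <= 3125 * Rpower R0 (- d) / d ^ 5.
Proof.
  intros HR0 Hr Hd; assert (He := ell_pos R0 r HR0 Hr); set (e := ell R0 r) in *.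
  assert (Hr' : Rpower r (- d) = Rpower R0 (- d) / exp (d * e)).
  { unfold Rpower, Rdiv, e, ell; rewrite <- exp_Ropp, <- exp_plus, ln_div by lra; f_equal; ring. }
  assert (H5 := exp_ge_pow5 (d * e) ltac:(nra)).
  assert (Hexp : 0 < exp (d * e)) by apply exp_pos.
  assert (HR : 0 < Rpower R0 (- d)) by apply exp_pos.
  rewrite Hr'.
  apply (Rmult_le_reg_r (exp (d * e) * d ^ 5));
    [apply Rmult_lt_0_compat; [lra | apply pow_lt, Hd] |].
  replace (e ^ 5 * (Rpower R0 (- d) / exp (d * e)) * (exp (d * e) * d ^ 5))
    with (Rpower R0 (- d) * (d * e) ^ 5) by (field; lra).
  replace (3125 * Rpower R0 (- d) / d ^ 5 * (exp (d * e) * d ^ 5))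
    with (Rpower R0 (- d) * (3125 * exp (d * e))) by (field; lra).
  apply Rmult_le_compat_l; lra.
Qed.

Lemma power_gap_lt b c beta e : 0 < b -> 0 < c -> 0 < beta < 1 ->
  rpow (c / b) (1 / (1 - beta)) < e -> c * rpow e beta < b * e.
Proof.
  intros Hb Hc Hbeta He.
  assert (Hcb : 0 < c / b) by (apply Rdiv_lt_0_compat; lra).
  rewrite rpow_Rpower in He by exact Hcb.
  assert (He0 : 0 < e)
    by (generalize (exp_pos (1 / (1 - beta) * ln (c / b))); unfold Rpower in He; lra).
  assert (Hgap : c / b < Rpower e (1 - beta)).
  { replace (c / b) with (Rpower (Rpower (c / b) (1 / (1 - beta))) (1 - beta)).
    - apply Rlt_Rpower_l; [lra | split; [apply exp_pos | exact He]].
    - rewrite Rpower_mult; replace (1 / (1 - beta) * (1 - beta)) with 1 by (field; lra).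
      apply Rpower_1, Hcb. }
  assert (Hsplit : e = Rpower e (1 - beta) * Rpower e beta).
  { rewrite <- Rpower_plus; replace (1 - beta + beta) with 1 by ring; rewrite Rpower_1; lra. }
  rewrite rpow_Rpower by exact He0; rewrite Hsplit at 2.
  assert (0 < Rpower e beta) by apply exp_pos.
  replace c with (b * (c / b)) by (field; lra).
  rewrite Rmult_assoc; apply Rmult_lt_compat_l; [lra |].
  apply Rmult_lt_compat_r; lra.
Qed.

Lemma inverse_square_dominates g u4 u6 e : 0 < g -> 1 <= e ->
  1 + 2 * (Rabs u4 + Rabs u6) / g <= e ->
  g / (2 * e ^ 2) <= g / e ^ 2 + u4 / e ^ 4 - u6 / e ^ 6.
Proof.
  intros Hg He HE.
  assert (HM : 2 * (Rabs u4 + Rabs u6) <= g * e).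
  { apply (Rmult_le_compat_l g) in HE; [| lra].
    replace (g * (1 + 2 * (Rabs u4 + Rabs u6) / g)) with (g + 2 * (Rabs u4 + Rabs u6)) in HE
      by (field; lra).
    lra. }
  assert (Hu4 := Rle_abs (- u4)); rewrite Rabs_Ropp in Hu4.
  assert (Hu6 := Rle_abs u6).
  assert (He2 : 1 <= e ^ 2) by nra.
  apply (Rmult_le_reg_r (e ^ 6)); [apply pow_lt; lra |].
  replace (g / (2 * e ^ 2) * e ^ 6) with (g * e ^ 4 / 2) by (field; lra).
  replace ((g / e ^ 2 + u4 / e ^ 4 - u6 / e ^ 6) * e ^ 6) with (g * e ^ 4 + u4 * e ^ 2 - u6)
    by (field; lra).
  assert (He3 : e * e ^ 2 <= e ^ 4) by (replace (e ^ 4) with (e * e ^ 2 * e) by ring; nra).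
  assert (2 * (Rabs u4 + Rabs u6) * e ^ 2 <= g * e ^ 4).
  { apply Rle_trans with (g * e * e ^ 2); [apply Rmult_le_compat_r; lra |].
    rewrite Rmult_assoc; apply Rmult_le_compat_l; lra. }
  assert (- Rabs u4 * e ^ 2 <= u4 * e ^ 2) by (apply Rmult_le_compat_r; lra).
  assert (Rabs u6 <= Rabs u6 * e ^ 2) by (generalize (Rabs_pos u6); nra).
  lra.
Qed.

(** * The third inequality *)

Section Supersolution.

Variables N l b beta R0 : R.
Hypotheses (HN : N = 2 * l + 6) (Hml : 0 < mexp N < l) (Hp : 1 < pJL N)
  (HpQ : pJL N * QQ N (mexp N) = QQ N l)
  (Hb : 0 < b) (Hbeta : 0 < beta < 1) (HR0 : 0 < R0).

Let m := mexp N.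
Let p := pJL N.
Let L := Lc N.
Let Qm := QQ N m.

Lemma QQ_mexp_pos : 0 < Qm.
Proof. unfold Qm; rewrite HN; apply QQ_pos; fold m; subst N; exact Hml. Qed.

Lemma Lc_pos : 0 < L.
Proof. exact (proj1 (Lc_pow N Hp QQ_mexp_pos)). Qed.

(* [L^p r^(-m p) = L Q(m) r^(-m-6)], since [L^(p-1) = Q(m)] and [m (p-1) = 6]. *)
Lemma Rpower_Lc_rpow r : 0 < r -> Rpower (L * rpow r (- m)) p = L * Qm * rpow r (- m) / r ^ 6.
Proof.
  intros Hr; assert (HL := Lc_pos); assert (HRm : 0 < rpow r (- m)) by (apply rpow_pos, Hr).
  destruct (Lc_pow N Hp QQ_mexp_pos) as [_ HLp]; fold p L m Qm in HLp.
  assert (Hmp : m * (p - 1) = 6) by (unfold m, p, mexp; field; lra).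
  rewrite <- Rpower_mult_distr by lra.
  replace (Rpower L p) with (L * Qm)
    by (rewrite <- HLp, rpow_Rpower, <- (Rpower_1 L) at 1 by lra;
        rewrite <- Rpower_plus; f_equal; ring).
  rewrite rpow_Rpower, Rpower_mult by lra.
  replace (- m * p) with (- m + - INR 6) by (simpl; lra).
  rewrite Rpower_plus, (Rpower_Ropp r (INR 6)), Rpower_pow by lra; field; lra.
Qed.

Let gam := beta * (1 - beta) * ((l + 2)^2 * (l + 4)^2 + l^2 * (l + 4)^2 + l^2 * (l + 2)^2).
Let u4 := (l^2 + (l + 2)^2 + (l + 4)^2) * (beta * (beta - 1) * (beta - 2) * (beta - 3)).
Let u6 := beta * (beta - 1) * (beta - 2) * (beta - 3) * (beta - 4) * (beta - 5).

Lemma log_correction_leading_pos : 0 < gam.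
Proof.
  unfold gam; apply Rmult_lt_0_compat; [nra |].
  assert (0 < l ^ 2 * (l + 2) ^ 2) by (apply Rmult_lt_0_compat; apply pow_lt; lra).
  assert (0 <= (l + 2) ^ 2 * (l + 4) ^ 2) by (apply Rmult_le_pos; apply pow2_ge_0).
  assert (0 <= l ^ 2 * (l + 4) ^ 2) by (apply Rmult_le_pos; apply pow2_ge_0).
  lra.
Qed.

Let K := 3125 * Rpower R0 (- (l - m)) / (l - m) ^ 5.

(* Threshold for [ℓ]: its summands make the [ℓ^-4], [ℓ^-6] terms of [log_correction]
   negligible, force [X < L r^-m], and absorb the second-order remainder. *)
Let E := 1 + 2 * (Rabs u4 + Rabs u6) / gam + b * K / L + 2 * p ^ 2 * Qm * b ^ 2 * K / (L * gam).

Lemma threshold_bounds : 1 <= E /\ 1 + 2 * (Rabs u4 + Rabs u6) / gam <= E /\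
  b * K / L < E /\ 2 * p ^ 2 * Qm * b ^ 2 * K / (L * gam) < E.
Proof.
  assert (HK : 0 < K).
  { unfold K; apply Rdiv_lt_0_compat; [apply Rmult_lt_0_compat; [lra | apply exp_pos] |].
    apply pow_lt; unfold m; lra. }
  assert (Hg := log_correction_leading_pos); assert (HL := Lc_pos); assert (HQ := QQ_mexp_pos).
  assert (0 <= 2 * (Rabs u4 + Rabs u6) / gam).
  { apply Rmult_le_pos; [generalize (Rabs_pos u4) (Rabs_pos u6); lra |].
    apply Rlt_le, Rinv_0_lt_compat, Hg. }
  assert (0 < b * K / L) by (apply Rdiv_lt_0_compat; nra).
  assert (0 < 2 * p ^ 2 * Qm * b ^ 2 * K / (L * gam)).
  { apply Rdiv_lt_0_compat; [| nra].
    assert (0 < p ^ 2 * b ^ 2) by (apply Rmult_lt_0_compat; apply pow_lt; unfold p; lra).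
    assert (0 < Qm * K) by (apply Rmult_lt_0_compat; assumption).
    nra. }
  unfold E; repeat split; lra.
Qed.

Lemma rpow_neg_l_split r : 0 < r -> rpow r (- l) = Rpower r (- (l - m)) * rpow r (- m).
Proof. intros Hr; rewrite !rpow_Rpower, <- Rpower_plus by exact Hr; f_equal; ring. Qed.

Lemma ell_pow5_gap_le r : R0 < r -> ell R0 r ^ 5 * Rpower r (- (l - m)) <= K.
Proof. intros Hr; apply ell_pow5_Rpower_le; unfold m; lra. Qed.

Lemma decay_gap_lt_Lc r : R0 < r -> E <= ell R0 r -> b * ell R0 r * Rpower r (- (l - m)) < L.
Proof.
  intros Hr He; destruct threshold_bounds as (H1 & _ & HT1 & _).
  assert (HL := Lc_pos); set (e := ell R0 r) in *; set (W := Rpower r (- (l - m))).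
  assert (Hdecay := ell_pow5_gap_le r Hr); fold e W in Hdecay.
  assert (HbK : b * K < L * e).
  { apply (Rmult_lt_compat_r L) in HT1; [| lra].
    replace (b * K / L * L) with (b * K) in HT1 by (field; lra).
    apply Rlt_le_trans with (E * L); [exact HT1 |].
    rewrite Rmult_comm; apply Rmult_le_compat_l; lra. }
  assert (He4 : e <= e ^ 4).
  { assert (1 <= e ^ 3) by (apply pow_R1_Rle; lra).
    replace (e ^ 4) with (e * e ^ 3) by ring; nra. }
  apply (Rmult_lt_reg_r (e ^ 4)); [apply pow_lt; lra |].
  replace (b * e * W * e ^ 4) with (b * (e ^ 5 * W)) by ring.
  apply Rle_lt_trans with (b * K); [apply Rmult_le_compat_l; lra |].
  apply Rlt_le_trans with (L * e); [lra | apply Rmult_le_compat_l; lra].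
Qed.

Lemma second_order_remainder_le c r X : R0 < r -> E <= ell R0 r -> 1 <= c * rpow (ell R0 r) beta ->
  0 <= X <= b * ell R0 r * rpow r (- l) ->
  p ^ 2 * Qm * X ^ 2 / (L * rpow r (- m))
  <= rpow r (- l) * (c * rpow (ell R0 r) beta * log_correction l beta (ell R0 r)).
Proof.
  intros Hr He Hc HX; destruct threshold_bounds as (H1 & HE1 & _ & HT2).
  assert (HL := Lc_pos); assert (HQ := QQ_mexp_pos); assert (Hg := log_correction_leading_pos).
  assert (Hr0 : 0 < r) by lra.
  assert (HRm : 0 < rpow r (- m)) by (apply rpow_pos, Hr0).
  rewrite rpow_neg_l_split in HX |- * by exact Hr0.
  set (e := ell R0 r) in *; set (W := Rpower r (- (l - m))) in *; set (Rm := rpow r (- m)) in *.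
  assert (HW : 0 < W) by apply exp_pos.
  assert (Hdecay := ell_pow5_gap_le r Hr); fold e W in Hdecay.
  assert (HG : gam / (2 * e ^ 2) <= log_correction l beta e)
    by (apply (inverse_square_dominates gam u4 u6); lra).
  assert (Hp0 : 0 < p) by (unfold p; lra).
  assert (Hpq : 0 < p ^ 2 * Qm) by (apply Rmult_lt_0_compat; [apply pow_lt |]; lra).
  assert (Hpqb : 0 < p ^ 2 * Qm * b ^ 2) by (apply Rmult_lt_0_compat; [| apply pow_lt]; lra).
  assert (He3 : 0 < e ^ 3) by (apply pow_lt; lra).
  apply Rle_trans with (W * Rm * (p ^ 2 * Qm * b ^ 2 * (e ^ 5 * W) / (L * e ^ 3))).
  { replace (W * Rm * (p ^ 2 * Qm * b ^ 2 * (e ^ 5 * W) / (L * e ^ 3)))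
      with (p ^ 2 * Qm * (b * e * (W * Rm)) ^ 2 / (L * Rm)) by (field; lra).
    apply Rmult_le_compat_r; [apply Rlt_le, Rinv_0_lt_compat; nra |].
    apply Rmult_le_compat_l; [lra | apply pow_incr; lra]. }
  apply Rmult_le_compat_l; [nra |].
  apply Rle_trans with (gam / (2 * e ^ 2)).
  2:{ assert (0 < gam / (2 * e ^ 2))
        by (apply Rdiv_lt_0_compat; [| apply Rmult_lt_0_compat, pow_lt]; lra).
      apply Rle_trans with (1 * log_correction l beta e); [lra | apply Rmult_le_compat_r; lra]. }
  apply Rle_trans with (p ^ 2 * Qm * b ^ 2 * K / (L * e ^ 3)).
  { unfold Rdiv; apply Rmult_le_compat_r; [apply Rlt_le, Rinv_0_lt_compat; nra |].
    apply Rmult_le_compat_l; lra. }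
  apply (Rmult_le_reg_r (2 * e ^ 3 / gam)); [apply Rdiv_lt_0_compat; nra |].
  replace (p ^ 2 * Qm * b ^ 2 * K / (L * e ^ 3) * (2 * e ^ 3 / gam))
    with (2 * p ^ 2 * Qm * b ^ 2 * K / (L * gam)) by (field; nra).
  replace (gam / (2 * e ^ 2) * (2 * e ^ 3 / gam)) with e by (field; nra).
  lra.
Qed.

Lemma u_up_pow_le_minus_lap_w_up c r : 1 <= c -> R0 < r -> E <= ell R0 r ->
  c * rpow (ell R0 r) beta <= b * ell R0 r ->
  rpow (u_up N l b c beta R0 r) p <= - lap N (w_up N l b c beta R0) r.
Proof.
  intros Hc Hr He Hgap; destruct threshold_bounds as (H1 & _).
  assert (HL := Lc_pos); assert (HQ := QQ_mexp_pos); assert (Hr0 : 0 < r) by lra.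
  rewrite (minus_lap_w_up N l b c beta R0 r HR0 Hr HN); cbv zeta; fold m L Qm.
  assert (HRm : 0 < rpow r (- m)) by (apply rpow_pos, Hr0).
  assert (HeB : 1 <= rpow (ell R0 r) beta)
    by (rewrite rpow_Rpower by lra; rewrite <- (Rpower_O (ell R0 r)) by lra;
        apply Rle_Rpower; lra).
  set (X := rpow r (- l) * (b * ell R0 r - c * rpow (ell R0 r) beta)).
  assert (HX : 0 <= X <= b * ell R0 r * rpow r (- l)).
  { assert (0 < rpow r (- l)) by (apply rpow_pos, Hr0).
    assert (0 <= c * rpow (ell R0 r) beta) by nra.
    unfold X; split; [apply Rmult_le_pos; lra | nra]. }
  assert (HXL : X < L * rpow r (- m)).
  { rewrite rpow_neg_l_split in HX by exact Hr0.
    assert (H := decay_gap_lt_Lc r Hr He).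
    apply (Rmult_lt_compat_r (rpow r (- m))) in H; [nra | exact HRm]. }
  replace (u_up N l b c beta R0 r) with (L * rpow r (- m) - X)
    by (unfold u_up, X; fold m L; ring).
  rewrite rpow_Rpower by lra.
  eapply Rle_trans; [apply Rpower_sub_le; [lra | unfold p; lra] |].
  rewrite Rpower_Lc_rpow by exact Hr0.
  assert (Hrem := second_order_remainder_le c r X Hr He ltac:(nra) HX).
  rewrite <- HpQ; fold m p Qm.
  apply Rle_trans with
    ((L * Qm * rpow r (- m) - p * Qm * X + p ^ 2 * Qm * X ^ 2 / (L * rpow r (- m))) / r ^ 6).
  { right; field; repeat split; (apply pow_nonzero; lra) || lra. }
  unfold Rdiv; apply Rmult_le_compat_r; [apply Rlt_le, Rinv_0_lt_compat, pow_lt, Hr0 |].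
  unfold X in *; lra.
Qed.

Lemma w_up_supersolution : exists c1, 0 < c1 /\ forall c, c1 < c ->
  forall r, R0 * exp (rpow (c / b) (1 / (1 - beta))) < r ->
  - lap N (w_up N l b c beta R0) r >= rpow (u_up N l b c beta R0 r) (pJL N).
Proof.
  destruct threshold_bounds as (H1 & _).
  assert (HE : 0 < Rpower E (1 - beta)) by apply exp_pos.
  exists (1 + b * Rpower E (1 - beta)); split; [nra |].
  intros c Hc r Hr.
  assert (Hcb : 0 < c / b) by (apply Rdiv_lt_0_compat; nra).
  set (t := rpow (c / b) (1 / (1 - beta))) in Hr.
  assert (HEt : E < t).
  { unfold t; rewrite rpow_Rpower by exact Hcb.
    replace E with (Rpower (Rpower E (1 - beta)) (1 / (1 - beta)))
      by (rewrite Rpower_mult; replace ((1 - beta) * (1 / (1 - beta))) with 1 by (field; lra);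
          apply Rpower_1; lra).
    apply Rlt_Rpower_l; [apply Rdiv_lt_0_compat; lra |].
    split; [exact HE |]; apply (Rmult_lt_reg_l b); [lra |]; field_simplify; lra. }
  assert (Hte := ell_gt_of_gt R0 t r HR0 Hr).
  assert (HrR0 : R0 < r).
  { assert (1 < exp t) by (rewrite <- exp_0; apply exp_increasing; lra); nra. }
  apply Rle_ge, u_up_pow_le_minus_lap_w_up; [nra | exact HrR0 | lra |].
  apply Rlt_le, power_gap_lt; [lra | nra | lra | exact Hte].
Qed.

End Supersolution.

Theorem lemma4p4 (n : nat) (b beta R0 lam3 : R) :
  (15 <= n)%nat -> 0 < b -> 0 < beta < 1 -> 0 < R0 ->
  (* lam3 is the smallest positive root of P *)
  0 < lam3 -> Ppoly (INR n) lam3 = 0 ->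
  (forall lam, 0 < lam -> Ppoly (INR n) lam = 0 -> lam3 <= lam) ->
  (exists r1 r2 r3 : R,
     is_lub (fun r => 0 < r /\ u_low (INR n) (mexp (INR n) + lam3) b R0 r <= 0) r1 /\
     is_lub (fun r => 0 < r /\ v_low (INR n) (mexp (INR n) + lam3) b R0 r <= 0) r2 /\
     is_lub (fun r => 0 < r /\ w_low (INR n) (mexp (INR n) + lam3) b R0 r <= 0) r3 /\
     R0 < r1 /\ r1 < r2 /\ r2 < r3) ->
  exists c1 : R, 0 < c1 /\
    forall c : R, c1 < c ->
      (forall r, R0 < r ->
         - lap (INR n) (u_up (INR n) (mexp (INR n) + lam3) b c beta R0) r
         = v_up (INR n) (mexp (INR n) + lam3) b c beta R0 r) /\
      (forall r, R0 < r ->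
         - lap (INR n) (v_up (INR n) (mexp (INR n) + lam3) b c beta R0) r
         = w_up (INR n) (mexp (INR n) + lam3) b c beta R0 r) /\
      (forall r, R0 * exp (rpow (c / b) (1 / (1 - beta))) < r ->
         - lap (INR n) (w_up (INR n) (mexp (INR n) + lam3) b c beta R0) r
         >= rpow (u_up (INR n) (mexp (INR n) + lam3) b c beta R0 r) (pJL (INR n))).
Proof.
  intros Hn Hb Hbeta HR0 Hlam HP Hmin _.
  assert (HN : 15 <= INR n) by (replace 15 with (INR 15) by (simpl; ring); apply le_INR, Hn).
  rewrite (smallest_root_center _ _ HN Hlam HP Hmin).
  set (l := (INR n - 6) / 2); assert (Hl : INR n = 2 * l + 6) by (unfold l; field).
  destruct (pJL_balance _ HN) as (Hm & Hp & HpQ); fold l in Hm, HpQ.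
  destruct (w_up_supersolution (INR n) l b beta R0 Hl Hm Hp HpQ Hb Hbeta HR0)
    as (c1 & Hc1 & Hsuper).
  exists c1; split; [exact Hc1 |]; intros c Hc; repeat split.
  - intros r Hr; apply minus_lap_u_up; assumption.
  - intros r Hr; apply minus_lap_v_up; assumption.
  - apply Hsuper, Hc.
Qed.
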